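(* Let $D$ be a quadratic discriminant and $\mathcal{O}_D$ the associated quadratic order. Suppose that every rational prime number $p$ satisfying \[ p \le \begin{cases} \sqrt{|D|/3} & \text{if } D<0,\\ \sqrt{D/5} & \text{if } D>0\end{cases} \] that is irreducible in $\mathcal{O}_D$ is also prime in $\mathcal{O}_D$. Then $\mathcal{O}_D$ is a unique factorization domain.
   Context: A quadratic discriminant is a nonsquare integer $D$ with $D\equiv 0$ or $1 \pmod 4$. Write $D=4d+\sigma$ with $\sigma\in\{0,1\}$ and $d\in\mathbb{Z}$, and let $\tau=\frac{\sigma+\sqrt{D}}{2}$. Then $\mathcal{O}_D=\mathbb{Z}[\tau]=\mathbb{Z}+\mathbb{Z}\tau=\{\frac{u+v\sqrt{D}}{2}: u,v\in\mathbb{Z},\ u\equiv vD \pmod 2\}$. In a domain $R$, an element $\pi$ is irreducible if it is nonzero, not a unit, and whenever $\pi=\alpha\beta$ with $\alpha,\beta\in R$ one of $\alpha,\beta$ is a unit; $\pi$ is prime if it is nonzero, not a unit, and $\pi\mid\alpha\beta$ implies $\pi\mid\alpha$ or $\pi\mid\beta$. *)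

From Stdlib Require Import ZArith Znumtheory List Permutation.
Open Scope Z_scope.

Definition quad_disc (D : Z) : Prop :=
  (D mod 4 = 0 \/ D mod 4 = 1) /\ ~ (exists k : Z, k * k = D).

Definition qsigma (D : Z) : Z := D mod 4.
Definition qd (D : Z) : Z := (D - qsigma D) / 4.

(* Elements of O_D = Z + Z tau, represented as a + b tau,
   tau = (sigma + sqrt D)/2, so tau^2 = sigma tau + d. *)
Record OD : Type := mkOD { re : Z ; im : Z }.

Definition OD0 : OD := mkOD 0 0.
Definition OD1 : OD := mkOD 1 0.
Definition ODint (n : Z) : OD := mkOD n 0.

Definition ODmul (D : Z) (x y : OD) : OD :=
  mkOD (re x * re y + im x * im y * qd D)
       (re x * im y + im x * re y + im x * im y * qsigma D).

Definition ODunit (D : Z) (x : OD) : Prop := exists y, ODmul D x y = OD1.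
Definition ODdvd (D : Z) (x y : OD) : Prop := exists z, y = ODmul D x z.

Definition ODirreducible (D : Z) (x : OD) : Prop :=
  x <> OD0 /\ ~ ODunit D x /\
  forall a b, x = ODmul D a b -> ODunit D a \/ ODunit D b.

Definition ODprime (D : Z) (x : OD) : Prop :=
  x <> OD0 /\ ~ ODunit D x /\
  forall a b, ODdvd D x (ODmul D a b) -> ODdvd D x a \/ ODdvd D x b.

Definition ODassoc (D : Z) (x y : OD) : Prop :=
  exists u, ODunit D u /\ y = ODmul D u x.

Definition ODprod (D : Z) (l : list OD) : OD := fold_right (ODmul D) OD1 l.

Definition ODisUFD (D : Z) : Prop :=
  forall x, x <> OD0 -> ~ ODunit D x ->
    (exists l, Forall (ODirreducible D) l /\ ODprod D l = x) /\
    (forall l1 l2, Forall (ODirreducible D) l1 -> Forall (ODirreducible D) l2 ->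
       ODprod D l1 = x -> ODprod D l2 = x ->
       exists l2', Permutation l2 l2' /\ Forall2 (ODassoc D) l1 l2').

(* p <= sqrt(|D|/3) (D<0) resp. p <= sqrt(D/5) (D>0), for p > 0,
   stated equivalently without square roots. *)
Definition small_prime_bound (D p : Z) : Prop :=
  (D < 0 -> 3 * (p * p) <= - D) /\ (D > 0 -> 5 * (p * p) <= D).

From Stdlib Require Import ZArith Znumtheory List Permutation Lia Psatz Classical.
Open Scope Z_scope.

(* The norm
   N(a + b tau) = a^2 + sigma a b - d b^2 is multiplicative, equals
   x * conj x, vanishes only at 0 (D is not a square), and detects units.

   1. An element of O_D whose norm is +-q, q a rational prime, is prime:
      O_D modulo such an element is Z/qZ (every x is an integer mod it).
   2. If q is a rational prime for which "irreducible => prime" holds, then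
      some prime element of norm +-q or q^2 divides q; hence every y with
      q | N(y) has a prime factor of that norm.
   3. Descent: if N(y) = p k with p not dividing k and all primes dividing k
      as in 2 and smaller than p, then peeling off from y the prime factors
      above them, one at a time, yields an element of norm +-p.
   4. For a prime p outside the bound of the theorem, if p is irreducible
      but not prime then p | N(m + tau) for some m, and m can be chosen with
      0 < |N(m + tau)| < p^2 (this is where the bound is used).  Step 3
      gives N(w) = +-p, so p = w * (+-conj w) is reducible.  By strong
      induction on p, every rational prime that is irreducible is prime.
   5. By 2 every irreducible element then has a prime associate, so
      irreducibles are prime.  Existence of factorizations follows by
      induction on |N|, and uniqueness is the usual argument with primes. *)

Definition ODadd (x y : OD) : OD := mkOD (re x + re y) (im x + im y).
Definition ODopp (x : OD) : OD := mkOD (- re x) (- im x).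
Definition Nm (D : Z) (x : OD) : Z :=
  re x * re x + qsigma D * re x * im x - qd D * im x * im x.
Definition conj (D : Z) (x : OD) : OD := mkOD (re x + qsigma D * im x) (- im x).
Definition tau : OD := mkOD 0 1.

Lemma OD_ext x y : re x = re y -> im x = im y -> x = y.
Proof. destruct x, y; simpl; intros; subst; reflexivity. Qed.

Ltac od_ring :=
  intros; repeat match goal with
    x : OD |- _ => let a := fresh "a" in let b := fresh "b" in destruct x as [a b] end;
  unfold ODmul, ODadd, ODopp, conj, ODint, OD1, OD0, Nm, tau; cbn [re im];
  first [ring | apply OD_ext; cbn [re im]; ring].

Section Arithmetic.
Variable D : Z.

Lemma mul_comm x y : ODmul D x y = ODmul D y x. Proof. od_ring. Qed.
Lemma mul_assoc x y z : ODmul D x (ODmul D y z) = ODmul D (ODmul D x y) z.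
Proof. od_ring. Qed.
Lemma mul_1_l x : ODmul D OD1 x = x. Proof. od_ring. Qed.
Lemma mul_1_r x : ODmul D x OD1 = x. Proof. od_ring. Qed.
Lemma mul_0_l x : ODmul D OD0 x = OD0. Proof. od_ring. Qed.
Lemma mul_add_r x y z : ODmul D x (ODadd y z) = ODadd (ODmul D x y) (ODmul D x z).
Proof. od_ring. Qed.
Lemma mul_opp_r x y : ODmul D x (ODopp y) = ODopp (ODmul D x y). Proof. od_ring. Qed.
Lemma add_opp_cancel x y : ODadd (ODadd x y) (ODopp y) = x. Proof. od_ring. Qed.
Lemma int_mul m n : ODmul D (ODint m) (ODint n) = ODint (m * n). Proof. od_ring. Qed.
Lemma mul_int_l n x : ODmul D (ODint n) x = mkOD (n * re x) (n * im x).
Proof. od_ring. Qed.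

Lemma mul_conj x : ODmul D x (conj D x) = ODint (Nm D x). Proof. od_ring. Qed.
Lemma conj_mul x y : conj D (ODmul D x y) = ODmul D (conj D x) (conj D y).
Proof. od_ring. Qed.
Lemma conj_conj x : conj D (conj D x) = x. Proof. od_ring. Qed.

Lemma Nm_mul x y : Nm D (ODmul D x y) = Nm D x * Nm D y. Proof. od_ring. Qed.
Lemma Nm_conj x : Nm D (conj D x) = Nm D x. Proof. od_ring. Qed.
Lemma Nm_int n : Nm D (ODint n) = n * n. Proof. od_ring. Qed.
Lemma Nm_0 : Nm D OD0 = 0. Proof. od_ring. Qed.
Lemma Nm_1 : Nm D OD1 = 1. Proof. od_ring. Qed.

Lemma mul_signed_conj x e : ODmul D x (ODmul D (ODint e) (conj D x)) = ODint (e * Nm D x).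
Proof. rewrite mul_assoc, (mul_comm x), <- mul_assoc, mul_conj, int_mul. reflexivity. Qed.

Lemma unit_Nm x : ODunit D x <-> Nm D x = 1 \/ Nm D x = -1.
Proof.
  split.
  - intros [y Hy]. apply (f_equal (Nm D)) in Hy.
    rewrite Nm_mul, Nm_1 in Hy. apply Z.eq_mul_1 in Hy. lia.
  - intros HN. exists (ODmul D (ODint (Nm D x)) (conj D x)).
    rewrite mul_signed_conj. unfold OD1, ODint. f_equal. nia.
Qed.

Lemma unit_1 : ODunit D OD1.
Proof. exists OD1. apply mul_1_l. Qed.

Lemma unit_mul u v : ODunit D u -> ODunit D v -> ODunit D (ODmul D u v).
Proof. rewrite !unit_Nm, Nm_mul. lia. Qed.

Lemma dvd_refl x : ODdvd D x x.
Proof. exists OD1. rewrite mul_1_r. reflexivity. Qed.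

Lemma dvd_trans x y z : ODdvd D x y -> ODdvd D y z -> ODdvd D x z.
Proof. intros [a ->] [b ->]. exists (ODmul D a b). symmetry. apply mul_assoc. Qed.

Lemma dvd_mul_r x y w : ODdvd D x y -> ODdvd D x (ODmul D y w).
Proof. intros [a ->]. exists (ODmul D a w). symmetry. apply mul_assoc. Qed.

Lemma dvd_mul_l x y w : ODdvd D x y -> ODdvd D x (ODmul D w y).
Proof. rewrite mul_comm. apply dvd_mul_r. Qed.

Lemma dvd_factor_l x y : ODdvd D x (ODmul D x y).
Proof. exists y. reflexivity. Qed.

Lemma dvd_add x a b : ODdvd D x a -> ODdvd D x b -> ODdvd D x (ODadd a b).
Proof. intros [u ->] [v ->]. exists (ODadd u v). symmetry. apply mul_add_r. Qed.

Lemma dvd_add_inv x a b : ODdvd D x (ODadd a b) -> ODdvd D x b -> ODdvd D x a.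
Proof.
  intros [u Hu] [v ->]. exists (ODadd u (ODopp v)).
  rewrite mul_add_r, mul_opp_r, <- Hu. symmetry. apply add_opp_cancel.
Qed.

Lemma dvd_conj x y : ODdvd D x y -> ODdvd D (conj D x) (conj D y).
Proof. intros [a ->]. exists (conj D a). apply conj_mul. Qed.

Lemma dvd_Nm x y : ODdvd D x y -> (Nm D x | Nm D y).
Proof. intros [a ->]. rewrite Nm_mul. apply Z.divide_factor_l. Qed.

Lemma dvd_unit x u : ODunit D u -> ODdvd D x u -> ODunit D x.
Proof. intros [v Hv] [w ->]. exists (ODmul D w v). rewrite mul_assoc. exact Hv. Qed.

Lemma dvd_int_iff p y : ODdvd D (ODint p) y <-> (p | re y) /\ (p | im y).
Proof.
  split.
  - intros [z ->]. rewrite mul_int_l. simpl. split; apply Z.divide_factor_l.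
  - intros [[a Ha] [b Hb]]. exists (mkOD a b). rewrite mul_int_l.
    apply OD_ext; simpl; lia.
Qed.

(* Conjugation is an automorphism, so it preserves primality. *)
Lemma prime_conj x : ODprime D x -> ODprime D (conj D x).
Proof.
  intros [H0 [H1 H2]]. split; [|split].
  - intro E. apply H0. rewrite <- (conj_conj x), E. od_ring.
  - rewrite unit_Nm, Nm_conj. rewrite unit_Nm in H1. exact H1.
  - intros a b Hab. apply dvd_conj in Hab. rewrite conj_conj, conj_mul in Hab.
    destruct (H2 _ _ Hab) as [H|H]; apply dvd_conj in H; rewrite conj_conj in H; auto.
Qed.

Lemma prime_mul_unit p u : ODprime D p -> ODunit D u -> ODprime D (ODmul D p u).
Proof.
  intros [H0 [H1 H2]] Hu. split; [|split].
  - intro E. apply H0. destruct Hu as [v Hv].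
    rewrite <- (mul_1_r p), <- Hv, mul_assoc, E. apply mul_0_l.
  - intro E. apply H1. eapply dvd_unit; [exact E|apply dvd_factor_l].
  - intros a b Hd. destruct Hu as [v Hv].
    assert (Hp : ODdvd D p (ODmul D a b)) by (eapply dvd_trans; [apply dvd_factor_l|exact Hd]).
    destruct (H2 a b Hp) as [[w ->]|[w ->]]; [left|right];
      exists (ODmul D v w); rewrite <- mul_assoc, (mul_assoc u v), Hv, mul_1_l; reflexivity.
Qed.

Lemma not_irreducible_split x : x <> OD0 -> ~ ODunit D x -> ~ ODirreducible D x ->
  exists a b, x = ODmul D a b /\ ~ ODunit D a /\ ~ ODunit D b.
Proof.
  intros H0 H1 H2. apply NNPP. intro Hn. apply H2. split; [exact H0|split; [exact H1|]].
  intros a b E. apply NNPP. intro Hab. apply Hn. exists a, b. tauto.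
Qed.

End Arithmetic.

(* If c^2 = D b^2 with b <> 0 then D is a perfect square (descent on |b|:
   with r = floor(sqrt D), the pair (D b - r c, c - r b) is a smaller solution). *)
Lemma square_ratio D b c : b <> 0 -> c * c = D * b * b -> exists k, k * k = D.
Proof.
  intros Hb0 E.
  assert (Hgen : forall n, 0 <= n -> forall b c, 0 < b <= n -> 0 <= c ->
            c * c = D * b * b -> exists k, k * k = D).
  { intros n Hn. pattern n. apply Z_lt_induction; [|exact Hn]. clear n Hn b c Hb0 E.
    intros n IH b c Hb Hc E.
    assert (HD : 0 <= D) by nia.
    pose proof (Z.sqrt_spec D HD) as Hs. cbn zeta in Hs.
    pose proof (Z.sqrt_nonneg D) as Hr0. set (r := Z.sqrt D) in *.
    destruct (Z.eq_dec (r * r) D) as [Er|Er]; [exists r; exact Er|].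
    assert (r * b < c) by nia.
    assert (c < (r + 1) * b) by nia.
    apply (IH (c - r * b) ltac:(lia) (c - r * b) (D * b - r * c)); nia. }
  apply (Hgen (Z.abs b) ltac:(lia) (Z.abs b) (Z.abs c)); nia.
Qed.

Section Discriminant.
Variable D : Z.
Hypothesis hD : quad_disc D.

Lemma qsigma_qd : (qsigma D = 0 \/ qsigma D = 1) /\ D = 4 * qd D + qsigma D.
Proof.
  destruct hD as [H _]. unfold qd, qsigma.
  pose proof (Z.div_mod D 4 ltac:(lia)).
  replace (D - D mod 4) with (D / 4 * 4) by lia.
  rewrite Z.div_mul by lia. lia.
Qed.

Lemma four_Nm a b : 4 * Nm D (mkOD a b) = (2 * a + qsigma D * b) * (2 * a + qsigma D * b) - D * b * b.
Proof.
  destruct qsigma_qd as [Hs Hd]. unfold Nm; cbn [re im].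
  set (s := qsigma D) in *; set (d := qd D) in *.
  rewrite Hd. destruct Hs as [Hs|Hs]; rewrite Hs; ring.
Qed.

(* Only 0 has norm 0, because D is not a square. *)
Lemma Nm_eq0 x : Nm D x = 0 -> x = OD0.
Proof.
  intros H. destruct x as [a b]. pose proof (four_Nm a b) as E.
  destruct (Z.eq_dec b 0) as [->|Hb].
  - unfold Nm in H; cbn [re im] in H. assert (a = 0) by nia. subst. reflexivity.
  - exfalso. apply (proj2 hD). apply (square_ratio D b (2 * a + qsigma D * b) Hb). lia.
Qed.

Lemma Nm_neq0 x : x <> OD0 -> Nm D x <> 0.
Proof. intros H E. apply H, Nm_eq0, E. Qed.

Lemma mul_cancel x a b : x <> OD0 -> ODmul D x a = ODmul D x b -> a = b.
Proof.
  intros Hx E. apply (f_equal (ODmul D (conj D x))) in E.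
  rewrite !mul_assoc, (mul_comm D (conj D x)), mul_conj, !mul_int_l in E.
  pose proof (Nm_neq0 x Hx). injection E; intros. apply OD_ext; nia.
Qed.

End Discriminant.

(* Coordinate identities behind the residue map modulo alpha below. *)
Lemma residue_formula D al s t :
  ODmul D al (ODadd (ODint s) (ODmul D (ODint t) (ODmul D (conj D al) tau)))
  = mkOD (s * re al) (s * im al + t * Nm D al).
Proof. od_ring. Qed.

Lemma residue_product D al r w r' w' :
  ODmul D (ODadd (ODint r) (ODmul D al w)) (ODadd (ODint r') (ODmul D al w'))
  = ODadd (ODint (r * r'))
      (ODmul D al (ODadd (ODmul D w (ODint r'))
                  (ODadd (ODmul D (ODint r) w') (ODmul D al (ODmul D w w'))))).
Proof. od_ring. Qed.

(* Elements of prime norm: O_D modulo alpha is Z/qZ, so alpha is prime. *)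
Section PrimeNorm.
Variables (D q : Z) (al : OD).
Hypothesis Hq : prime q.
Hypothesis HN : Nm D al = q \/ Nm D al = - q.

(* Otherwise q^2 would divide the norm +-q. *)
Lemma prime_norm_im : ~ (q | im al).
Proof.
  pose proof (prime_ge_2 q Hq) as Hq2.
  intros [t Ht]. destruct al as [a1 a2]; cbn [im] in Ht; subst a2.
  unfold Nm in HN; cbn [re im] in HN.
  set (s := qsigma D) in *; set (d := qd D) in *.
  assert (Ha1 : (q | a1 * a1)).
  { destruct HN as [E|E];
      [exists (1 - s * a1 * t + d * t * t * q)|exists (-1 - s * a1 * t + d * t * t * q)]; lia. }
  assert (Hqa : (q | a1)) by (destruct (prime_mult q Hq a1 a1 Ha1); assumption).
  destruct Hqa as [r ->]. set (X := r * r + s * r * t - d * t * t).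
  assert (E : q * X = 1 \/ q * X = -1).
  { destruct HN as [E|E]; [left|right]; apply (Z.mul_reg_l _ _ q); unfold X; lia. }
  destruct E as [E|E]; [|assert (E' : q * (- X) = 1) by lia];
    [apply Z.eq_mul_1 in E|apply Z.eq_mul_1 in E']; lia.
Qed.

(* Every element is congruent to a rational integer modulo alpha:
   if u q + v (im alpha) = 1 and q = e N(alpha), then
   x = (re x - im x v re alpha) + alpha (im x v + im x u e conj(alpha) tau). *)
Lemma prime_norm_residue x : exists r w, x = ODadd (ODint r) (ODmul D al w).
Proof.
  destruct (rel_prime_bezout _ _ (prime_rel_prime q Hq _ prime_norm_im)) as [u v Hb].
  assert (He : exists e, q = e * Nm D al) by (destruct HN as [E|E]; [exists 1|exists (-1)]; lia).
  destruct He as [e He].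
  exists (re x - im x * v * re al).
  exists (ODadd (ODint (im x * v)) (ODmul D (ODint (im x * u * e)) (ODmul D (conj D al) tau))).
  rewrite residue_formula. apply OD_ext; cbn [re im ODadd ODint]; [ring|].
  transitivity (im x * (u * (e * Nm D al) + v * im al)); [|ring].
  rewrite <- He, Hb. ring.
Qed.

Lemma prime_norm_dvd_int n : ODdvd D al (ODint n) <-> (q | n).
Proof.
  split.
  - intros Hd. apply dvd_Nm in Hd. rewrite Nm_int in Hd.
    assert (Hqn : (q | n * n)).
    { apply Z.divide_trans with (Nm D al); [|exact Hd].
      destruct HN as [E|E]; rewrite E; [apply Z.divide_refl|apply Z.divide_opp_r, Z.divide_refl]. }
    destruct (prime_mult q Hq n n Hqn); assumption.
  - intros [t ->]. destruct HN as [E|E];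
      [exists (ODmul D (ODint t) (conj D al))|exists (ODmul D (ODint (- t)) (conj D al))];
      rewrite mul_signed_conj, E; f_equal; ring.
Qed.

(* If alpha | x y, reduce x, y to integers r, r'; then q | r r'. *)
Lemma prime_of_prime_norm : ODprime D al.
Proof.
  pose proof (prime_ge_2 q Hq) as Hq2.
  split; [|split].
  - intro E. rewrite E, Nm_0 in HN. lia.
  - rewrite unit_Nm. lia.
  - intros x y Hxy.
    destruct (prime_norm_residue x) as [r [w Hx]], (prime_norm_residue y) as [r' [w' Hy]].
    rewrite Hx, Hy, residue_product in Hxy.
    assert (Hrr : (q | r * r')).
    { apply prime_norm_dvd_int. eapply dvd_add_inv; [exact Hxy|apply dvd_factor_l]. }
    destruct (prime_mult q Hq r r' Hrr) as [Hr|Hr]; apply prime_norm_dvd_int in Hr; [left|right].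
    + rewrite Hx. apply dvd_add; [exact Hr|apply dvd_factor_l].
    + rewrite Hy. apply dvd_add; [exact Hr|apply dvd_factor_l].
Qed.

End PrimeNorm.

Definition IrreducibleIsPrime (D q : Z) : Prop :=
  ODirreducible D (ODint q) -> ODprime D (ODint q).

Lemma exists_prime_divisor k : 1 < Z.abs k -> exists q, prime q /\ (q | k).
Proof.
  intros Hk.
  assert (Hpos : forall n, 0 <= n -> 1 < n -> exists q, prime q /\ (q | n)).
  { intros n0 Hn0. pattern n0. apply Z_lt_induction; [|exact Hn0]. clear n0 Hn0.
    intros n IH Hn. destruct (prime_dec n) as [Hp|Hnp].
    - exists n. split; [exact Hp|apply Z.divide_refl].
    - destruct (not_prime_divide n Hn Hnp) as [m [Hm Hmn]].
      destruct (IH m ltac:(lia) ltac:(lia)) as [q [Hq Hqm]].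
      exists q. split; [exact Hq|eapply Z.divide_trans; eauto]. }
  destruct (Hpos (Z.abs k) ltac:(lia) Hk) as [q [Hq Hqk]].
  exists q. split; [exact Hq|apply Z.divide_abs_r, Hqk].
Qed.

Lemma prime_square_split q x y : prime q -> x * y = q * q ->
  Z.abs x <> 1 -> Z.abs y <> 1 -> x = q \/ x = - q.
Proof.
  intros Hq E Hx Hy. pose proof (prime_ge_2 q Hq) as Hq2.
  assert (Hxy : (q | x * y)) by (rewrite E; apply Z.divide_factor_l).
  destruct (prime_mult q Hq x y Hxy) as [[x' ->]|[y' ->]].
  - assert (Hyq : (y | q)) by (exists x'; apply (Z.mul_reg_l _ _ q); lia).
    destruct (prime_divisors q Hq y Hyq) as [-> | [-> | [-> | ->]]]; nia.
  - assert (Hxq : (x | q)) by (exists y'; apply (Z.mul_reg_l _ _ q); lia).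
    destruct (prime_divisors q Hq x Hxq) as [-> | [-> | [-> | ->]]]; nia.
Qed.

Section PrimesAboveQ.
Variables (D q : Z).
Hypothesis Hq : prime q.
Hypothesis HqIP : IrreducibleIsPrime D q.

(* Above q lies a prime element of norm +-q or q^2: q itself if q is
   irreducible, otherwise a proper factor of q, whose norm is then +-q. *)
Lemma prime_above :
  exists pi, ODprime D pi /\ ODdvd D pi (ODint q) /\
             (Nm D pi = q \/ Nm D pi = - q \/ Nm D pi = q * q).
Proof.
  pose proof (prime_ge_2 q Hq) as Hq2.
  assert (Hq0 : ODint q <> OD0) by (intro E; injection E; lia).
  assert (Hqu : ~ ODunit D (ODint q)) by (rewrite unit_Nm, Nm_int; nia).
  destruct (classic (ODirreducible D (ODint q))) as [Hirr|Hnirr].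
  - exists (ODint q). split; [exact (HqIP Hirr)|split; [apply dvd_refl|]].
    rewrite Nm_int. tauto.
  - destruct (not_irreducible_split D _ Hq0 Hqu Hnirr) as [a [b [Hab [Ha Hb]]]].
    assert (HN : Nm D a = q \/ Nm D a = - q).
    { apply (prime_square_split q (Nm D a) (Nm D b) Hq).
      - rewrite <- Nm_mul, <- Hab. apply Nm_int.
      - rewrite unit_Nm in Ha. lia.
      - rewrite unit_Nm in Hb. lia. }
    exists a. split; [exact (prime_of_prime_norm D q a Hq HN)|split; [|tauto]].
    rewrite Hab. apply dvd_factor_l.
Qed.

(* If q divides N(y) = y conj(y), a prime above q (or its conjugate) divides y. *)
Lemma prime_factor_of_norm y : (q | Nm D y) ->
  exists rho z, y = ODmul D rho z /\ ODprime D rho /\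
                (Nm D rho = q \/ Nm D rho = - q \/ Nm D rho = q * q).
Proof.
  intros [t Ht]. destruct prime_above as [pi [Hpi [Hdiv HN]]].
  assert (Hyy : ODdvd D pi (ODmul D y (conj D y))).
  { rewrite mul_conj, Ht. eapply dvd_trans; [exact Hdiv|].
    exists (ODint t). rewrite int_mul. f_equal. ring. }
  destruct (proj2 (proj2 Hpi) _ _ Hyy) as [[z Hz]|[z Hz]].
  - exists pi, z. tauto.
  - exists (conj D pi), (conj D z). split; [|split].
    + rewrite <- (conj_conj D y), Hz. apply conj_mul.
    + apply prime_conj, Hpi.
    + rewrite Nm_conj. exact HN.
Qed.

End PrimesAboveQ.

(* One descent step: if N(y) = p k and q | k for a prime q < p satisfying
   "irreducible implies prime", a prime factor rho of y above q has norm
   c = +-q or q^2 prime to p, so its cofactor z has N(z) = p k' with k = c k'. *)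
Lemma descent_step D p q k y : prime p -> prime q -> q < p -> IrreducibleIsPrime D q ->
  (q | k) -> Nm D y = p * k ->
  exists z c k', Nm D z = p * k' /\ k = c * k' /\ 1 < Z.abs c.
Proof.
  intros Hp Hq Hqp HqIP Hqk HN.
  pose proof (prime_ge_2 p Hp) as Hp2. pose proof (prime_ge_2 q Hq) as Hq2.
  destruct (prime_factor_of_norm D q Hq HqIP y) as [rho [z [Hy [_ Hrho]]]];
    [rewrite HN; apply Z.divide_mul_r, Hqk|].
  assert (HNy : p * k = Nm D rho * Nm D z) by (rewrite <- HN, Hy; apply Nm_mul).
  assert (Hprho : ~ (p | Nm D rho)).
  { intros Hd. assert (Hpq : (p | q)).
    { destruct Hrho as [E|[E|E]]; rewrite E in Hd.
      - exact Hd.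
      - apply Z.divide_opp_r in Hd. rewrite Z.opp_involutive in Hd. exact Hd.
      - destruct (prime_mult p Hp q q Hd); assumption. }
    apply Z.divide_pos_le in Hpq; lia. }
  assert (Hpz : (p | Nm D z)).
  { destruct (prime_mult p Hp (Nm D rho) (Nm D z)) as [H|H];
      [rewrite <- HNy; apply Z.divide_factor_l|contradiction|exact H]. }
  destruct Hpz as [k' Hk']. exists z, (Nm D rho), k'. split; [rewrite Hk'; ring|split].
  - apply (Z.mul_reg_l _ _ p); [lia|]. rewrite HNy, Hk'. ring.
  - destruct Hrho as [E|[E|E]]; rewrite E; nia.
Qed.

Lemma norm_descent D p k y : prime p -> Nm D y = p * k -> k <> 0 -> ~ (p | k) ->
  (forall q, prime q -> (q | k) -> q < p /\ IrreducibleIsPrime D q) ->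
  exists w, Nm D w = p \/ Nm D w = - p.
Proof.
  intros Hp. remember (Z.abs k) as n eqn:Hn. assert (Hn0 : 0 <= n) by lia.
  revert k y Hn. pattern n. apply Z_lt_induction; [|exact Hn0]. clear n Hn0.
  intros n IH k y Hn HN Hk0 Hpk Hsmall.
  destruct (Z.eq_dec (Z.abs k) 1) as [E1|E1]; [exists y; rewrite HN; lia|].
  destruct (exists_prime_divisor k ltac:(lia)) as [q [Hq Hqk]].
  destruct (Hsmall q Hq Hqk) as [Hqp HqIP].
  destruct (descent_step D p q k y Hp Hq Hqp HqIP Hqk HN) as [z [c [k' [Hz [Ek Hc]]]]].
  assert (Hdvd : forall r, (r | k') -> (r | k)) by (intros r Hr; rewrite Ek; apply Z.divide_mul_r, Hr).
  apply (IH (Z.abs k') ltac:(subst n k; rewrite Z.abs_mul; nia) k' z eq_refl Hz).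
  - intros ->. lia.
  - intros Hd. apply Hpk, Hdvd, Hd.
  - intros r Hr Hd. apply Hsmall; [exact Hr|apply Hdvd, Hd].
Qed.

(* If p is not prime in O_D, then p | N(a) for some a with p not dividing a:
   take p | a b with p dividing neither factor; then p | conj(a) a b = N(a) b. *)
Lemma norm_dvd_of_not_prime D p : prime p -> ~ ODprime D (ODint p) ->
  exists a, (p | Nm D a) /\ ~ ODdvd D (ODint p) a.
Proof.
  intros Hp Hnp. pose proof (prime_ge_2 p Hp) as Hp2.
  assert (Hex : exists a b, ODdvd D (ODint p) (ODmul D a b) /\
                  ~ ODdvd D (ODint p) a /\ ~ ODdvd D (ODint p) b).
  { apply NNPP. intros Hn. apply Hnp. split; [|split].
    - intro E. injection E. lia.
    - rewrite unit_Nm, Nm_int. nia.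
    - intros a b Hab. apply NNPP. intro Hc. apply Hn. exists a, b. tauto. }
  destruct Hex as [a [b [Hab [Ha Hb]]]]. exists a. split; [|exact Ha].
  apply (dvd_mul_l D _ _ (conj D a)) in Hab.
  rewrite mul_assoc, (mul_comm D (conj D a)), mul_conj, mul_int_l, dvd_int_iff in Hab.
  cbn [re im] in Hab. destruct Hab as [H1 H2].
  destruct (prime_mult p Hp _ _ H1) as [H|H1']; [exact H|].
  destruct (prime_mult p Hp _ _ H2) as [H|H2']; [exact H|].
  exfalso. apply Hb, dvd_int_iff. tauto.
Qed.

(* Normalising such an a to the form m + tau: with u p + v (im a) = 1,
   N(v re a + tau) is congruent to v^2 N(a) modulo p. *)
Lemma norm_root_of_norm_dvd D p a : prime p -> (p | Nm D a) -> ~ ODdvd D (ODint p) a ->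
  exists m, (p | Nm D (mkOD m 1)).
Proof.
  intros Hp [k Hk] Ha. destruct a as [a1 a2].
  assert (Ha2 : ~ (p | a2)).
  { intros [t Ht]. apply Ha, dvd_int_iff. cbn [re im]. split; [|exists t; exact Ht].
    subst a2. unfold Nm in Hk; cbn [re im] in Hk.
    assert (Hd : (p | a1 * a1)) by (exists (k - qsigma D * a1 * t + qd D * t * t * p); nia).
    destruct (prime_mult p Hp _ _ Hd); assumption. }
  destruct (rel_prime_bezout _ _ (prime_rel_prime p Hp _ Ha2)) as [u v Hb].
  exists (v * a1), (v * v * k + qsigma D * (v * a1) * u - qd D * u * (v * a2 + 1)).
  transitivity (v * v * Nm D (mkOD a1 a2)
                + p * (qsigma D * (v * a1) * u - qd D * u * (v * a2 + 1))
                + (1 - (u * p + v * a2)) * (qsigma D * (v * a1) - qd D * (1 + v * a2))).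
  - unfold Nm; cbn [re im]. ring.
  - rewrite Hb, Hk. ring.
Qed.

(* Translating m by multiples of p preserves p | N(m + tau), so 2 m + sigma
   can be placed in any half-open window of length 2 p. *)
Lemma norm_root_window D p m c : 0 < p -> (p | Nm D (mkOD m 1)) ->
  exists m', (p | Nm D (mkOD m' 1)) /\ c < 2 * m' + qsigma D <= c + 2 * p.
Proof.
  intros Hp [k Hk].
  set (n := 2 * m + qsigma D - c - 1).
  pose proof (Z.div_mod n (2 * p) ltac:(lia)) as Hdiv.
  pose proof (Z.mod_pos_bound n (2 * p) ltac:(lia)) as Hmod.
  set (t := n / (2 * p)) in *.
  exists (m - p * t). split; [|lia].
  exists (k - t * (2 * m - p * t + qsigma D)).
  transitivity (Nm D (mkOD m 1) - p * t * (2 * m - p * t + qsigma D)).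
  - unfold Nm; cbn [re im]. ring.
  - rewrite Hk. ring.
Qed.

(* A rational integer n that is +-N(w) for a nonunit w factors as
   w * (+-conj w), so it is not irreducible. *)
Lemma int_reducible_of_norm D n w : Nm D w = n \/ Nm D w = - n -> 1 < n ->
  ~ ODirreducible D (ODint n).
Proof.
  intros HN Hn [_ [_ Hirr]].
  assert (He : exists e, e * e = 1 /\ n = e * Nm D w)
    by (destruct HN as [E|E]; [exists 1|exists (-1)]; lia).
  destruct He as [e [He1 He]].
  set (c := ODmul D (ODint e) (conj D w)).
  assert (Hw : ~ ODunit D w) by (rewrite unit_Nm; lia).
  assert (Hc : ~ ODunit D c) by (unfold c; rewrite unit_Nm, Nm_mul, Nm_int, Nm_conj; nia).
  destruct (Hirr w c) as [H|H]; [|contradiction|contradiction].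
  unfold c. rewrite mul_signed_conj, He. reflexivity.
Qed.

Section LargePrimes.
Variable D : Z.
Hypothesis hD : quad_disc D.

(* Outside the bound of the theorem, a root of N(m + tau) modulo p can be
   chosen with 0 < |N(m + tau)| < p^2, using 4 N(m + tau) = (2m+sigma)^2 - D. *)
Lemma small_norm_root p m : prime p -> ~ small_prime_bound D p -> (p | Nm D (mkOD m 1)) ->
  exists m', (p | Nm D (mkOD m' 1)) /\ Nm D (mkOD m' 1) <> 0 /\ Z.abs (Nm D (mkOD m' 1)) < p * p.
Proof.
  intros Hp Hb Hm. pose proof (prime_ge_2 p Hp) as Hp2.
  assert (Hsuff : forall m', (p | Nm D (mkOD m' 1)) ->
            D - 4 * (p * p) < (2 * m' + qsigma D) * (2 * m' + qsigma D) < D + 4 * (p * p) ->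
            exists m', (p | Nm D (mkOD m' 1)) /\ Nm D (mkOD m' 1) <> 0 /\
                       Z.abs (Nm D (mkOD m' 1)) < p * p).
  { intros m' Hdvd Hbd. exists m'. split; [exact Hdvd|split].
    - intros E. apply Nm_eq0 in E; [discriminate E|exact hD].
    - pose proof (four_Nm D hD m' 1). lia. }
  assert (Hcase : (D < 0 /\ - D < 3 * (p * p)) \/ (0 < D /\ D < 5 * (p * p)))
    by (unfold small_prime_bound in Hb; lia).
  destruct (Z_lt_le_dec D (4 * (p * p))) as [Hsmall|Hlarge].
  - (* Here -3 p^2 < D < 4 p^2; take 2 m' + sigma in [-p, p - 1]. *)
    destruct (norm_root_window D p m (- p - 1) ltac:(lia) Hm) as [m' [Hdvd Hw]].
    apply (Hsuff m' Hdvd). set (r := 2 * m' + qsigma D) in *.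
    assert (0 <= r * r <= p * p) by (split; [apply Z.square_nonneg|nia]).
    lia.
  - (* Here 4 p^2 <= D < 5 p^2; with L = floor(sqrt(D - 4 p^2)) < p,
       take 2 m' + sigma in [L + 1, L + 2 p]. *)
    assert (H0 : 0 <= D - 4 * (p * p)) by lia.
    pose proof (Z.sqrt_spec _ H0) as HL. cbn zeta in HL.
    pose proof (Z.sqrt_nonneg (D - 4 * (p * p))).
    set (L := Z.sqrt (D - 4 * (p * p))) in *.
    assert (L < p) by nia.
    destruct (norm_root_window D p m L ltac:(lia) Hm) as [m' [Hdvd Hw]].
    apply (Hsuff m' Hdvd). set (r := 2 * m' + qsigma D) in *. nia.
Qed.

(* Otherwise p | N(m + tau)
   with 0 < |N(m + tau)| = p |k| < p^2, and the descent applied to k produces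
   an element of norm +-p, making p reducible. *)
Lemma large_prime_irreducible_prime p : prime p -> ~ small_prime_bound D p ->
  (forall q, prime q -> q < p -> IrreducibleIsPrime D q) -> IrreducibleIsPrime D p.
Proof.
  intros Hp Hb IH Hirr. pose proof (prime_ge_2 p Hp) as Hp2.
  apply NNPP. intros Hnp.
  destruct (norm_dvd_of_not_prime D p Hp Hnp) as [a [Ha Hpa]].
  destruct (norm_root_of_norm_dvd D p a Hp Ha Hpa) as [m Hm].
  destruct (small_norm_root p m Hp Hb Hm) as [m' [[k Hk] [Hn0 Hlt]]].
  assert (Hk0 : k <> 0) by (intros ->; lia).
  assert (Hkp : Z.abs k < p) by (rewrite Hk, Z.abs_mul in Hlt; nia).
  destruct (norm_descent D p k (mkOD m' 1) Hp) as [w Hw].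
  - rewrite Hk. ring.
  - exact Hk0.
  - intros Hd. apply Z.divide_abs_r, Z.divide_pos_le in Hd; lia.
  - intros q Hq Hqk. apply Z.divide_abs_r, Z.divide_pos_le in Hqk; [|lia].
    split; [lia|]. apply IH; [exact Hq|lia].
  - exact (int_reducible_of_norm D p w Hw ltac:(lia) Hirr).
Qed.

Lemma all_primes_irreducible_prime :
  (forall p, prime p -> small_prime_bound D p -> IrreducibleIsPrime D p) ->
  forall p, prime p -> IrreducibleIsPrime D p.
Proof.
  intros Hsmall p Hp.
  assert (Hp0 : 0 <= p) by (pose proof (prime_ge_2 p Hp); lia).
  revert Hp. pattern p. apply Z_lt_induction; [|exact Hp0]. clear p Hp0.
  intros p IH Hp.
  destruct (classic (small_prime_bound D p)) as [Hs|Hs]; [exact (Hsmall p Hp Hs)|].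
  apply (large_prime_irreducible_prime p Hp Hs).
  intros q Hq Hqp. apply IH; [pose proof (prime_ge_2 q Hq); lia|exact Hq].
Qed.

End LargePrimes.

Lemma prod_app D l1 l2 : ODprod D (l1 ++ l2) = ODmul D (ODprod D l1) (ODprod D l2).
Proof.
  induction l1 as [|x l1 IH]; simpl; [symmetry; apply mul_1_l|].
  rewrite IH. apply mul_assoc.
Qed.

Lemma prod_perm D l l' : Permutation l l' -> ODprod D l = ODprod D l'.
Proof.
  induction 1; simpl; try congruence.
  rewrite !mul_assoc, (mul_comm D y x). reflexivity.
Qed.

Lemma prime_dvd_prod D p l : ODprime D p -> ODdvd D p (ODprod D l) ->
  exists y, In y l /\ ODdvd D p y.
Proof.
  intros [_ [Hu Hp]]. induction l as [|a l IH]; simpl; intros Hd.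
  - exfalso. apply Hu. eapply dvd_unit; [apply unit_1|exact Hd].
  - destruct (Hp _ _ Hd) as [H|H]; [exists a; auto|].
    destruct (IH H) as [y [Hy Hy']]. exists y; auto.
Qed.

Section Factorization.
Variable D : Z.
Hypothesis hD : quad_disc D.

(* Once all rational primes satisfy "irreducible implies prime", so do all
   elements: an irreducible g with q | N(g) is a prime above q times a unit. *)
Lemma irreducible_is_prime :
  (forall q, prime q -> IrreducibleIsPrime D q) ->
  forall g, ODirreducible D g -> ODprime D g.
Proof.
  intros HIP g [H0 [H1 H2]].
  assert (Hn : 1 < Z.abs (Nm D g)).
  { pose proof (Nm_neq0 D hD g H0). rewrite unit_Nm in H1. lia. }
  destruct (exists_prime_divisor _ Hn) as [q [Hq Hqd]].
  destruct (prime_factor_of_norm D q Hq (HIP q Hq) g Hqd) as [rho [z [Hgz [Hrho _]]]].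
  destruct (H2 _ _ Hgz) as [U|U].
  - exfalso. exact (proj1 (proj2 Hrho) U).
  - rewrite Hgz. apply prime_mul_unit; assumption.
Qed.

Lemma factorization_exists x : x <> OD0 -> ~ ODunit D x ->
  exists l, Forall (ODirreducible D) l /\ ODprod D l = x.
Proof.
  remember (Z.abs (Nm D x)) as n eqn:Hn.
  assert (Hn0 : 0 <= n) by lia.
  revert x Hn. pattern n. apply Z_lt_induction; [|exact Hn0]. clear n Hn0.
  intros n IH x Hn H0 H1.
  destruct (classic (ODirreducible D x)) as [Hi|Hi].
  { exists (x :: nil). split; [constructor; auto|apply mul_1_r]. }
  destruct (not_irreducible_split D x H0 H1 Hi) as [a [b [Hab [Ha Hb]]]].
  assert (Ha0 : a <> OD0) by (intros ->; apply H0; rewrite Hab; apply mul_0_l).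
  assert (Hb0 : b <> OD0) by (intros ->; apply H0; rewrite Hab, mul_comm; apply mul_0_l).
  pose proof (Nm_neq0 D hD a Ha0). pose proof (Nm_neq0 D hD b Hb0).
  assert (HNa : Z.abs (Nm D a) <> 1) by (rewrite unit_Nm in Ha; lia).
  assert (HNb : Z.abs (Nm D b) <> 1) by (rewrite unit_Nm in Hb; lia).
  assert (En : n = Z.abs (Nm D a) * Z.abs (Nm D b)) by (rewrite <- Z.abs_mul, <- Nm_mul, <- Hab; exact Hn).
  destruct (IH (Z.abs (Nm D a)) ltac:(nia) a eq_refl Ha0 Ha) as [la [Fa Pa]].
  destruct (IH (Z.abs (Nm D b)) ltac:(nia) b eq_refl Hb0 Hb) as [lb [Fb Pb]].
  exists (la ++ lb). split; [apply Forall_app; auto|].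
  rewrite prod_app, Pa, Pb. symmetry. exact Hab.
Qed.

(* Uniqueness, up to a unit factor u carried along the induction: if all
   irreducibles are prime, the first factor of l1 divides a member of l2,
   which is then an associate of it; cancel both and recurse. *)
Lemma factorization_unique :
  (forall g, ODirreducible D g -> ODprime D g) ->
  forall l1 l2 u, ODunit D u -> Forall (ODirreducible D) l1 -> Forall (ODirreducible D) l2 ->
  ODprod D l1 = ODmul D u (ODprod D l2) ->
  exists l2', Permutation l2 l2' /\ Forall2 (ODassoc D) l1 l2'.
Proof.
  intros HP. induction l1 as [|pi l1 IH]; intros l2 u Hu F1 F2 E.
  - destruct l2 as [|y l2]; [exists nil; auto|exfalso].
    inversion F2 as [|? ? [_ [Hy _]] _]; subst. apply Hy.
    apply (dvd_unit D y OD1 (unit_1 D)). simpl in E. rewrite E.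
    apply dvd_mul_l, dvd_factor_l.
  - inversion F1 as [|? ? Hpi F1']; subst.
    pose proof (HP _ Hpi) as Hpp. destruct Hpp as [Hp0 [Hpu Hp2]].
    assert (Hd : ODdvd D pi (ODmul D u (ODprod D l2))) by (rewrite <- E; apply dvd_factor_l).
    destruct (Hp2 _ _ Hd) as [Hdu|Hdl]; [exfalso; apply Hpu; eapply dvd_unit; eauto|].
    destruct (prime_dvd_prod D pi l2 (HP _ Hpi) Hdl) as [y [Hin [v Hv]]].
    assert (Hyi : ODirreducible D y) by (rewrite Forall_forall in F2; auto).
    assert (Hvu : ODunit D v).
    { destruct Hyi as [_ [_ Hy3]]. destruct (Hy3 _ _ Hv); [contradiction|assumption]. }
    destruct (in_split y l2) as [A [B HAB]]; [exact Hin|].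
    assert (Hperm : Permutation l2 (y :: A ++ B)) by (rewrite HAB; apply Permutation_sym, Permutation_middle).
    assert (E2 : ODprod D l1 = ODmul D (ODmul D u v) (ODprod D (A ++ B))).
    { apply (mul_cancel D hD pi); [exact Hp0|].
      simpl in E. rewrite E, (prod_perm D _ _ Hperm). simpl. rewrite Hv, !mul_assoc.
      f_equal. rewrite (mul_comm D u pi), <- mul_assoc. reflexivity. }
    assert (F2' : Forall (ODirreducible D) (A ++ B)).
    { rewrite HAB in F2. apply Forall_app in F2 as [FA FB].
      inversion FB; subst. apply Forall_app; auto. }
    destruct (IH (A ++ B) (ODmul D u v) (unit_mul D u v Hu Hvu) F1' F2' E2) as [l2'' [Hp' Hf']].
    exists (y :: l2''). split.
    + eapply Permutation_trans; [exact Hperm|]. apply perm_skip, Hp'.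
    + constructor; [|exact Hf']. exists v. split; [exact Hvu|]. rewrite Hv. apply mul_comm.
Qed.

End Factorization.

Theorem theorem1 (D : Z) (hD : quad_disc D) :
  (forall p : Z, prime p -> small_prime_bound D p ->
     ODirreducible D (ODint p) -> ODprime D (ODint p)) ->
  ODisUFD D.
Proof.
  intros Hsmall.
  assert (HIP : forall q, prime q -> IrreducibleIsPrime D q)
    by exact (all_primes_irreducible_prime D hD Hsmall).
  assert (HP : forall g, ODirreducible D g -> ODprime D g)
    by exact (irreducible_is_prime D hD HIP).
  intros x H0 H1. split.
  - exact (factorization_exists D hD x H0 H1).
  - intros l1 l2 F1 F2 E1 E2.
    apply (factorization_unique D hD HP l1 l2 OD1 (unit_1 D) F1 F2).
    rewrite mul_1_l, E1, E2. reflexivity.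
Qed.
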